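(* Let $v,w\in\mathbb C$, let $u\in\mathbb C$ satisfy $u^2=w$, and set $A=-\mathrm{Re}(v)$, $B=-\mathrm{Im}(u)$, $C=-\mathrm{Im}(v)$, $D=\mathrm{Re}(u)$, and assume $BC-AD\neq0$. Let $\Gamma=\{-v(1-\tau)^2\pm2\sqrt{-w(1-(1-\tau)^2)(1-\tau)^2}:\tau\in[0,1]\}$, which is an ellipse passing through the origin. Then the foci of $\Gamma$ are the two roots of $z^2+vz+w$, i.e. the two roots of $Q(z)=z(z^2+vz+w)$ different from the origin. *)

From mathcomp Require Import all_boot all_order all_algebra.
From mathcomp Require Import reals.
From mathcomp.real_closed Require Export complex.

Set Implicit Arguments.
Unset Strict Implicit.
Unset Printing Implicit Defensive.

Import Order.TTheory GRing.Theory Num.Theory.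
Local Open Scope ring_scope.
Local Open Scope complex_scope.

(* The "+-" together with the square root means: both square roots y of the
   radicand are allowed, i.e. the points -v(1-tau)^2 + 2y with
   y^2 = -w(1-(1-tau)^2)(1-tau)^2. *)
Definition Gamma (R : realType) (v w : R[i]) : R[i] -> Prop :=
  fun z => exists tau : R, 0 <= tau <= 1 /\
    exists y : R[i],
      y ^+ 2 = - w * (1 - ((1 - tau)%:C) ^+ 2) * ((1 - tau)%:C) ^+ 2 /\
      z = - v * ((1 - tau)%:C) ^+ 2 + 2%:R * y.

(* E is a (non-degenerate) ellipse with foci f1 and f2: E is the set of
   points whose distances to f1 and f2 sum to a constant r > |f1 - f2|.
   (The foci of a non-degenerate ellipse are uniquely determined.) *)
Definition ellipse_with_foci (R : realType) (E : R[i] -> Prop) (f1 f2 : R[i]) : Prop :=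
  exists r : R,  (* `|.| is the complex modulus, real-valued in R[i] *)
    `|f1 - f2| < r%:C /\
    forall z : R[i], E z <-> `|z - f1| + `|z - f2| = r%:C.

(* Write w = u^2.  Putting t = 1 - tau, c = 1 - 2 t^2 and s = +-2 t sqrt(1 - t^2), the
   curve Gamma is { -v/2 + a c + b s : c^2 + s^2 = 1 } with a = v/2 and b = i u: the
   ellipse centred at -v/2 with conjugate semi-diameters a and b, non-degenerate because
   the determinant hypothesis says that a and b are R-linearly independent.  Its foci are
   -v/2 +- e for a square root e of a^2 + b^2 = (v^2 - 4w)/4, i.e. the roots of
   z^2 + v z + w.  Indeed, for p = a c + b s on the unit circle,
   |p - e| |p + e| = |p^2 - e^2| = |b c - a s|^2, so the focal sum satisfies
   (|p - e| + |p + e|)^2 = 2 (|a|^2 + |b|^2 + |e|^2); conversely a polynomial identity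
   shows that this value of the focal sum forces c^2 + s^2 = 1. *)

From mathcomp Require Import all_boot all_order all_algebra.
From mathcomp Require Import reals.
From mathcomp.real_closed Require Import complex.
From mathcomp Require Import ring lra.
Import Order.TTheory GRing.Theory Num.Theory.
(* ring_scope last, so that [x^*] and ['i] are the conjugation and imaginary unit of
   the numClosedFieldType R[i]. *)
Local Open Scope complex_scope.
Local Open Scope ring_scope.

Lemma ellipse_conj_identity {T : comPzRingType} (a a' b b' c s : T) :
  (a * a' + b * b') * (c ^+ 2 + s ^+ 2) =
  (a * c + b * s) * (a' * c + b' * s) + (b * c - a * s) * (b' * c - a' * s).
Proof. ring. Qed.

Lemma ellipse_defect_identity {T : comPzRingType} (a a' b b' c s : T) :
  let p := a * c + b * s in let p' := a' * c + b' * s in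
  (a * a' + b * b' - p * p') ^+ 2
    - (p ^+ 2 - (a ^+ 2 + b ^+ 2)) * (p' ^+ 2 - (a' ^+ 2 + b' ^+ 2))
  = (a * b' - a' * b) ^+ 2 * (c ^+ 2 + s ^+ 2 - 1).
Proof. rewrite /=; ring. Qed.

Lemma real_complex_real {R : rcfType} (c : R) : c%:C \is Num.real.
Proof. by apply/complex_realP; exists c. Qed.

Lemma conjC_real_lincomb {R : rcfType} (x y : R[i]) (c s : R) :
  (x * c%:C + y * s%:C)^* = x^* * c%:C + y^* * s%:C.
Proof. by rewrite rmorphD !rmorphM /= !(conj_Creal (real_complex_real _)). Qed.

Lemma real_lincomb_of_independent {R : rcfType} (a b p : R[i]) :
  a * b^* - a^* * b != 0 -> exists c s : R, p = a * c%:C + b * s%:C.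
Proof.
move=> delta_neq0.
(* Cramer's rule for the R-linear system [p = a c + b s]. *)
have real_coord x y : (x * y^* - x^* * y) / (a * b^* - a^* * b) \is Num.real.
  rewrite CrealE fmorph_div !rmorphB !rmorphM /= !conjCK.
  by rewrite -opprB -[X in _ / X]opprB invrN mulrNN.
exists (complex.Re ((p * b^* - p^* * b) / (a * b^* - a^* * b))).
exists (complex.Re ((a * p^* - a^* * p) / (a * b^* - a^* * b))).
by rewrite !RRe_real ?real_coord //; field.
Qed.

Definition centered_ellipse {R : rcfType} (a b : R[i]) (p : R[i]) : Prop :=
  exists c s : R, c ^+ 2 + s ^+ 2 = 1 /\ p = a * c%:C + b * s%:C.

Section ConfocalEllipse.
Variable R : rcfType.
Variables a b e : R[i].
Hypothesis e_sqr : e ^+ 2 = a ^+ 2 + b ^+ 2.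

(* [delta = 2 i Im (a conj(b))] vanishes iff [a] and [b] are R-linearly dependent. *)
Let delta := a * b^* - a^* * b.
Let focal_sum p := `|p - e| + `|p + e|.
Let K := 2%:R * (`|a| ^+ 2 + `|b| ^+ 2 + `|e| ^+ 2).

Lemma sqr_focal_sum p :
  focal_sum p ^+ 2 = 2%:R * (`|p| ^+ 2 + `|e| ^+ 2 + `|p ^+ 2 - e ^+ 2|).
Proof.
rewrite /focal_sum sqrrD -normrM (_ : (p - e) * (p + e) = p ^+ 2 - e ^+ 2); last by ring.
by rewrite !normCK !rmorphD !rmorphN /=; ring.
Qed.

Lemma focal_defectE (c s : R) (p := a * c%:C + b * s%:C) :
  (`|a| ^+ 2 + `|b| ^+ 2 - `|p| ^+ 2) ^+ 2 - `|p ^+ 2 - e ^+ 2| ^+ 2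
  = delta ^+ 2 * (c ^+ 2 + s ^+ 2 - 1)%:C.
Proof.
have eJ : e^* ^+ 2 = a^* ^+ 2 + b^* ^+ 2 by rewrite -rmorphXn e_sqr rmorphD !rmorphXn.
rewrite !normCK [(_ - _)^*]rmorphB !rmorphXn /= eJ /p !conjC_real_lincomb e_sqr.
by rewrite !rmorphB !rmorphD !rmorphXn rmorph1 -ellipse_defect_identity.
Qed.

Lemma sqr_focal_sum_eqK_norm p :
  focal_sum p ^+ 2 = K <-> `|p ^+ 2 - e ^+ 2| = `|a| ^+ 2 + `|b| ^+ 2 - `|p| ^+ 2.
Proof.
set L := `|a| ^+ 2 + `|b| ^+ 2 - `|p| ^+ 2.
have fsK : focal_sum p ^+ 2 - K = 2%:R * (`|p ^+ 2 - e ^+ 2| - L).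
  by rewrite sqr_focal_sum /K /L; ring.
split=> [/eqP | NL]; last by apply/eqP; rewrite -subr_eq0 fsK NL subrr mulr0.
by rewrite -subr_eq0 fsK mulf_eq0 pnatr_eq0 /= subr_eq0 => /eqP.
Qed.

Lemma sqr_focal_sum_eqK_circle (c s : R) :
  delta != 0 -> focal_sum (a * c%:C + b * s%:C) ^+ 2 = K <-> c ^+ 2 + s ^+ 2 = 1.
Proof.
move=> delta_neq0; rewrite sqr_focal_sum_eqK_norm.
have /= defect := focal_defectE c s.
split=> [norm_eq | cs1].
  move: defect; rewrite norm_eq subrr => /esym/eqP.
  rewrite mulf_eq0 sqrf_eq0 (negPf delta_neq0) /= => /eqP /complexI /eqP.
  by rewrite subr_eq0 => /eqP.
set p := a * c%:C + b * s%:C in defect *.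
have L_ge0 : 0 <= `|a| ^+ 2 + `|b| ^+ 2 - `|p| ^+ 2.
  have -> : `|a| ^+ 2 + `|b| ^+ 2 - `|p| ^+ 2 = `|b * c%:C + (- a) * s%:C| ^+ 2.
    rewrite /p !normCK !conjC_real_lincomb rmorphN /=.
    have := ellipse_conj_identity a a^* b b^* c%:C s%:C.
    rewrite -!rmorphXn -rmorphD cs1 rmorph1 mulr1 => ->; ring.
  exact/exprn_ge0/normr_ge0.
move: defect; rewrite cs1 subrr rmorph0 mulr0 => /eqP.
by rewrite subr_eq0 eq_sym eqrXn2 ?normr_ge0 // => /eqP.
Qed.

Lemma centered_ellipse_sqr_focal_sum p :
  delta != 0 -> centered_ellipse a b p <-> focal_sum p ^+ 2 = K.
Proof.
move=> delta_neq0; split=> [[c [s [cs1 ->]]] | fsK].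
  exact/(sqr_focal_sum_eqK_circle _ _ delta_neq0).
have [c [s pE]] := real_lincomb_of_independent _ _ p delta_neq0.
exists c, s; split=> //.
by apply/(sqr_focal_sum_eqK_circle _ _ delta_neq0); rewrite -pE.
Qed.

Lemma sqr_focal_distance_lt :
  delta != 0 -> `|e| ^+ 2 < `|a| ^+ 2 + `|b| ^+ 2.
Proof.
move=> delta_neq0.
have := focal_defectE 0 0.
rewrite /= rmorph0 !mulr0 addr0 normr0 !expr0n /= !sub0r normrN normrX subr0.
rewrite add0r sub0r rmorphN rmorph1 mulrN1 => defect.
rewrite -(ltr_pXn2r (_ : (0 < 2)%N)) ?qualifE /= ?addr_ge0 ?exprn_ge0 ?normr_ge0 //.
rewrite -subr_gt0 defect expr2 -mulrN.
have -> : - delta = delta^* by rewrite !rmorphB !rmorphM /= !conjCK opprB.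
by rewrite mul_conjC_gt0; exact: delta_neq0.
Qed.

Lemma focal_distance_lt_focal_sum p :
  delta != 0 -> centered_ellipse a b p -> `|e *+ 2| < focal_sum p.
Proof.
move=> delta_neq0 /(centered_ellipse_sqr_focal_sum _ delta_neq0) fsK.
rewrite -(ltr_pXn2r (_ : (0 < 2)%N)) ?qualifE /= ?addr_ge0 ?normr_ge0 // fsK.
rewrite -subr_gt0 normrMn (_ : K - _ = 2%:R * (`|a| ^+ 2 + `|b| ^+ 2 - `|e| ^+ 2)).
  by rewrite pmulr_rgt0 ?ltr0n // subr_gt0 sqr_focal_distance_lt.
by rewrite /K; ring.
Qed.

Lemma centered_ellipse_foci p0 p : delta != 0 -> centered_ellipse a b p0 ->
  centered_ellipse a b p <-> focal_sum p = focal_sum p0.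
Proof.
move=> delta_neq0 /(centered_ellipse_sqr_focal_sum _ delta_neq0) fs0.
rewrite centered_ellipse_sqr_focal_sum // -fs0.
split=> [/eqP | -> //].
by rewrite eqrXn2 ?addr_ge0 ?normr_ge0 // => /eqP.
Qed.

End ConfocalEllipse.

Lemma quadratic_vieta {T : comPzRingType} (v w z1 z2 : T) :
  (forall z, z ^+ 2 + v * z + w = (z - z1) * (z - z2)) -> v = - (z1 + z2) /\ w = z1 * z2.
Proof.
move=> factor; have w_eq : w = z1 * z2.
  by have := factor 0; rewrite expr0n mulr0 !add0r => ->; ring.
split=> //; have := factor 1; rewrite w_eq expr1n mulr1 => eq1.
apply: (addIr (1 + z1 * z2)).
rewrite [RHS](_ : _ = (1 - z1) * (1 - z2)); last by ring.
by rewrite -eq1; ring.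
Qed.

Lemma sqr_eq_real_multiple {R : rcfType} (x y : R[i]) (rho : R) : 0 <= rho ->
  y ^+ 2 = x ^+ 2 * rho%:C <-> exists sigma : R, sigma ^+ 2 = rho /\ y = x * sigma%:C.
Proof.
move=> rho_ge0; split=> [y2 | [sigma [<- ->]]]; last by rewrite rmorphXn /=; ring.
have : (y - x * (Num.sqrt rho)%:C) * (y - x * (- Num.sqrt rho)%:C) = 0.
  rewrite rmorphN (_ : _ * _ = y ^+ 2 - x ^+ 2 * (Num.sqrt rho)%:C ^+ 2); last by ring.
  by rewrite -rmorphXn /= sqr_sqrtr // y2 subrr.
move/eqP; rewrite mulf_eq0 !subr_eq0 => /orP [] /eqP ->.
  by exists (Num.sqrt rho); rewrite sqr_sqrtr.
by exists (- Num.sqrt rho); rewrite sqrrN sqr_sqrtr.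
Qed.

Lemma unit_circle_half_angle {R : rcfType} (c s : R) :
  c ^+ 2 + s ^+ 2 = 1 <->
  exists t, [/\ 0 <= t <= 1, (s / 2) ^+ 2 = (1 - t ^+ 2) * t ^+ 2 & c = 1 - 2 * t ^+ 2].
Proof.
split=> [cs1 | [t [_ s2 ->]]]; last first.
  have -> : s ^+ 2 = 4 * (s / 2) ^+ 2 by field.
  by rewrite s2; ring.
have c_ge : -1 <= c by nra.
have c_le : c <= 1 by nra.
have t2 : Num.sqrt ((1 - c) / 2) ^+ 2 = (1 - c) / 2 by rewrite sqr_sqrtr //; lra.
exists (Num.sqrt ((1 - c) / 2)); split; last 2 first.
- have s2 : s ^+ 2 = 1 - c ^+ 2 by rewrite -cs1 addrAC subrr add0r.
  by rewrite t2 expr_div_n s2; field.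
- by rewrite t2; field.
rewrite sqrtr_ge0 -(ler_pXn2r (_ : (0 < 2)%N)) ?qualifE /= ?sqrtr_ge0 // t2 expr1n; lra.
Qed.

Lemma Gamma_half_angle {R : realType} (v w u z : R[i]) : u ^+ 2 = w ->
  Gamma v w z <-> exists t sigma : R, [/\ 0 <= t <= 1,
    sigma ^+ 2 = (1 - t ^+ 2) * t ^+ 2 & z = - v * (t ^+ 2)%:C + 2%:R * ('i * u) * sigma%:C].
Proof.
move=> u2; split=> [[tau [/andP [tau_ge0 tau_le1] [y [y2 ->]]]] | [t [sigma [t01 sigma2 ->]]]].
  have rho_ge0 : 0 <= (1 - (1 - tau) ^+ 2) * (1 - tau) ^+ 2.
    by rewrite mulr_ge0 ?sqr_ge0 // subr_ge0; nra.
  have y2' : y ^+ 2 = ('i * u) ^+ 2 * ((1 - (1 - tau) ^+ 2) * (1 - tau) ^+ 2)%:C.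
    by rewrite y2 exprMn sqrCi u2 rmorphM rmorphB rmorph1 !rmorphXn /=; ring.
  have [sigma [sigma2 ->]] := (sqr_eq_real_multiple _ _ _ rho_ge0).1 y2'.
  exists (1 - tau), sigma; split=> //; first by apply/andP; split; lra.
  by rewrite rmorphXn /=; ring.
exists (1 - t); split; first by case/andP: t01 => ? ?; apply/andP; split; lra.
exists ('i * u * sigma%:C); rewrite subKr; split; last by ring.
by rewrite exprMn exprMn sqrCi u2 -rmorphXn sigma2 rmorphM rmorphB rmorph1 !rmorphXn /=; ring.
Qed.

Lemma Gamma_centered_ellipse {R : realType} (v w u z : R[i]) : u ^+ 2 = w ->
  Gamma v w z <-> centered_ellipse (v / 2%:R) ('i * u) (z + v / 2%:R).
Proof.
move=> u2; rewrite (Gamma_half_angle _ _ _ _ u2).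
split=> [[t [sigma [t01 sigma2 ->]]] | [c [s [cs1 zE]]]].
  exists (1 - 2 * t ^+ 2), (2 * sigma); split.
    apply/unit_circle_half_angle; exists t; split=> //.
    by rewrite (_ : 2 * sigma / 2 = sigma) //; field.
  by rewrite !(rmorphB, rmorph1, rmorphM, rmorphXn, rmorph_nat) /=; field.
have [t [t01 s2 cE]] := (unit_circle_half_angle c s).1 cs1.
exists t, (s / 2); split=> //.
rewrite -[z](addrK (v / 2%:R)) zE cE.
by rewrite !(rmorphB, rmorph1, rmorphM, rmorphXn, rmorph_nat, fmorph_div) /=; field.
Qed.

Lemma cross_conj_half_mul_i {R : rcfType} (v u : R[i]) :
  v / 2%:R * ('i * u)^* - (v / 2%:R)^* * ('i * u)
  = - 'i * ((- complex.Im u) * (- complex.Im v) - (- complex.Re v) * complex.Re u)%:C.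
Proof.
case: u v => [u1 u2] [v1 v2]; apply/eqP; rewrite eq_complex /=.
by apply/andP; split; apply/eqP; field.
Qed.

Theorem lemma2p3 (R : realType) (v w u : R[i]) :
  u ^+ 2 = w ->
  (- complex.Im u) * (- complex.Im v) - (- complex.Re v) * (complex.Re u) != 0 ->
  Gamma v w 0 /\
  forall z1 z2 : R[i],
    (forall z : R[i], z ^+ 2 + v * z + w = (z - z1) * (z - z2)) ->
    ellipse_with_foci (Gamma v w) z1 z2.
Proof.
move=> u2 det_neq0.
have Gamma0 : Gamma v w 0.
  exists 1; split; first by rewrite ler01 lexx.
  by exists 0; rewrite subrr rmorph0; split; ring.
split=> // z1 z2 /quadratic_vieta [v_eq w_eq].
set a := v / 2%:R; set b := 'i * u; set e := (z1 - z2) / 2%:R.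
have e_sqr : e ^+ 2 = a ^+ 2 + b ^+ 2.
  by rewrite [b ^+ 2]exprMn sqrCi u2 w_eq /a /e v_eq; field.
have delta_neq0 : a * b^* - a^* * b != 0.
  rewrite /a /b cross_conj_half_mul_i mulf_neq0 ?oppr_eq0 ?neq0Ci //.
  by rewrite -(rmorph0 (real_complex R)) (inj_eq (@complexI _)).
have focal_sumE z : `|z - z1| + `|z - z2| = `|z + a - e| + `|z + a + e|.
  have -> : z + a - e = z - z1 by rewrite /a /e v_eq; field.
  by have -> : z + a + e = z - z2 by rewrite /a /e v_eq; field.
have Gamma_a : centered_ellipse a b (0 + a).
  by rewrite -(Gamma_centered_ellipse _ _ _ _ u2).
exists (complex.Re (`|z1| + `|z2|)).
have r_eq : (complex.Re (`|z1| + `|z2|))%:C = `|0 + a - e| + `|0 + a + e|.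
  by rewrite RRe_real ?realD ?normr_real // -focal_sumE !sub0r !normrN.
split.
  rewrite r_eq (_ : z1 - z2 = e *+ 2); last by rewrite /e; field.
  exact: focal_distance_lt_focal_sum e_sqr _ delta_neq0 Gamma_a.
move=> z; rewrite (Gamma_centered_ellipse _ _ _ _ u2) focal_sumE r_eq.
exact: centered_ellipse_foci e_sqr _ _ delta_neq0 Gamma_a.
Qed.
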